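(* Let $X_1,\dots,X_k$ be i.i.d. random points in $\mathbb{R}^d$ with a bounded probability density $f$. Then there exists a constant $c^\star$ (depending only on $d$, $f$ and $k$) such that for every $r>0$, \[ \mathbb{P}\{\{X_1,\dots,X_k\}\text{ is contained in a ball of radius } r\}\le c^\star r^{d(k-1)}. \] *)

From HB Require Import structures.
From mathcomp Require Import all_boot all_order all_algebra.
From mathcomp Require Import all_classical all_reals all_analysis.
Set Implicit Arguments. Unset Strict Implicit. Unset Printing Implicit Defensive.
Import Order.TTheory GRing.Theory Num.Theory.
Local Open Scope classical_set_scope.
Local Open Scope ring_scope.

(* Points of R^d are represented as d-tuples of reals; d.-tuple R carries the
   product sigma-algebra (library instance, measure_tuple_display). *)

(* Lebesgue integral on R^n of a non-negative function, defined as the iterated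
   one-dimensional Lebesgue integral (by Tonelli this is the integral against
   the n-dimensional Lebesgue measure for non-negative measurable g). *)
Fixpoint lebesgue_int_tuple {R : realType} (n : nat) :
    (n.-tuple R -> \bar R) -> \bar R :=
  match n return (n.-tuple R -> \bar R) -> \bar R with
  | 0 => fun g => g [tuple]
  | n'.+1 => fun g =>
      (\int[@lebesgue_measure R]_(x in [set: R])
         lebesgue_int_tuple (fun t : n'.-tuple R => g (cons_tuple x t)))%E
  end.

Definition has_density {R : realType} {dO : measure_display}
    {O : measurableType dO} (P : probability O R) (d : nat)
    (Y : O -> d.-tuple R) (f : d.-tuple R -> R) : Prop :=
  forall A : set (d.-tuple R), measurable A ->
    P (Y @^-1` A) = lebesgue_int_tuple (fun x => ((\1_A x : R) * f x)%:E).

Definition mutually_independent {R : realType} {dO : measure_display}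
    {O : measurableType dO} (P : probability O R) (d k : nat)
    (X : 'I_k -> O -> d.-tuple R) : Prop :=
  forall A : 'I_k -> set (d.-tuple R), (forall i, measurable (A i)) ->
    P (\big[setI/setT]_(i < k) (X i @^-1` A i)) =
    (\prod_(i < k) P (X i @^-1` A i))%E.

Definition sqdist {R : realType} (d : nat) (x y : d.-tuple R) : R :=
  \sum_(j < d) (tnth x j - tnth y j) ^+ 2.

Definition in_ball_event {R : realType} {O : Type} (d k : nat)
    (X : 'I_k -> O -> d.-tuple R) (r : R) : set O :=
  [set w | exists c : d.-tuple R, forall i, sqdist (X i w) c <= r ^+ 2].

(* Cut R^d into the half-open cubes Q_z (z in Z^d) of side 2r. If the k points
   lie in a ball of radius r, each coordinate of each X_i is within 2r of the
   same coordinate of X_1, so X_1 in Q_z forces every other X_i into the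
   concentric cube of side 6r, an event of probability at most M (6r)^d since
   f <= M. By independence, the probability that X_1 lies in Q_z and all other
   points in the big cube is at most P(X_1 in Q_z) (M (6r)^d)^(k-1); the Q_z are
   disjoint, so summing over z gives the bound with c* = (M 6^d)^(k-1).

   The event itself is measurable because it is the intersection over m of the
   events "in a ball of squared radius r^2 + 1/(m+1) with a rational centre":
   by the parallelogram law such near-centres form a Cauchy sequence whose limit
   is an exact centre. *)

From HB Require Import structures.
From mathcomp Require Import all_boot all_order all_algebra.
From mathcomp Require Import all_classical all_reals all_analysis.
From mathcomp Require Import ring lra.
Import Order.TTheory GRing.Theory Num.Theory numFieldNormedType.Exports.
Local Open Scope classical_set_scope.
Local Open Scope ring_scope.

Section sqdist.
Context {R : realType} {d : nat}.
Implicit Types (x y a b : d.-tuple R) (r : R).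

Lemma sqrB_tnth_le_sqdist x y j : (tnth x j - tnth y j) ^+ 2 <= sqdist x y.
Proof.
by rewrite /sqdist (bigD1 j) //= lerDl; apply: sumr_ge0 => i _; apply: sqr_ge0.
Qed.

Lemma dist_tnth_le {x y r} j :
  0 <= r -> sqdist x y <= r ^+ 2 -> `|tnth x j - tnth y j| <= r.
Proof.
move=> r0 /(le_trans (sqrB_tnth_le_sqdist x y j)).
by rewrite -real_normK ?num_real // ler_pXn2r ?nnegrE.
Qed.

Definition midpoint a b : d.-tuple R :=
  [tuple (tnth a j + tnth b j) / 2 | j < d].

Lemma sqdist_midpoint x a b :
  sqdist x (midpoint a b) = (sqdist x a + sqdist x b) / 2 - sqdist a b / 4.
Proof.
rewrite /sqdist -big_split !mulr_suml -sumrB; apply: eq_bigr => j _ /=.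
by rewrite tnth_mktuple; field.
Qed.

Lemma sqdist_le_perturb x a b (B e : R) : 0 <= B -> 0 <= e ->
  (forall j, `|tnth x j - tnth a j| <= B) ->
  (forall j, `|tnth a j - tnth b j| <= e) ->
  sqdist x b <= sqdist x a + d%:R * (2 * B * e + e ^+ 2).
Proof.
move=> B0 e0 xa ab.
rewrite /sqdist mulr_natl -[X in _ *+ X]card_ord -sumr_const -big_split /=.
apply: ler_sum => j _.
by move: (xa j) (ab j); rewrite !ler_norml => /andP[? ?] /andP[? ?]; nra.
Qed.

Lemma cvg_sqdist y (c : nat -> d.-tuple R) (l : d.-tuple R) :
  (forall j, (fun n => tnth (c n) j) @ \oo --> tnth l j) ->
  (fun n => sqdist y (c n)) @ \oo --> sqdist y l.
Proof.
move=> cl; apply: cvg_big => [|j _]; first exact: add_continuous.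
have cj : (fun n => tnth y j - tnth (c n) j) @ \oo --> tnth y j - tnth l j.
  by apply: cvgB => //; exact: cvg_cst.
by rewrite expr2; under eq_fun do rewrite expr2; apply: cvgM.
Qed.

Lemma cvg_tnth_of_sqdist_le (c : nat -> d.-tuple R) (e : nat -> R) :
  e @ \oo --> 0 -> (forall m n, sqdist (c m) (c n) <= e m + e n) ->
  forall j, cvgn (fun n => tnth (c n) j).
Proof.
move=> e0 ce j; apply: R_complete; apply: cauchy_exP => eps eps0.
have eps2 : 0 < eps ^+ 2 / 4 by rewrite divr_gt0 ?exprn_gt0.
have [N _ eN] := cvgr_le _ e0 _ eps2.
exists (tnth (c N) j); exists N => // n /= Nn.
rewrite -ball_normE /= -(@ltr_pXn2r _ 2) ?nnegrE ?(ltW eps0) //.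
rewrite real_normK ?num_real //.
apply: le_lt_trans (sqrB_tnth_le_sqdist _ _ j) _.
apply: le_lt_trans (ce N n) _.
have := eN N (leqnn N); have := eN n Nn; nra.
Qed.

End sqdist.

Section enclosing_ball.
Context {R : realType} {d k : nat} (x : 'I_k -> d.-tuple R) (r : R).

Let center_exists := exists c, forall i, sqdist (x i) c <= r ^+ 2.

Lemma sqdist_near_centers_le (c c' : d.-tuple R) (e e' : R) : ~ center_exists ->
  (forall i, sqdist (x i) c <= r ^+ 2 + e) ->
  (forall i, sqdist (x i) c' <= r ^+ 2 + e') ->
  sqdist c c' <= 2 * (e + e').
Proof.
move=> nocenter xc xc'.
have [i far] : exists i, r ^+ 2 < sqdist (x i) (midpoint c c').
  apply: contrapT => near; apply: nocenter; exists (midpoint c c') => i.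
  by rewrite leNgt; apply/negP => far; apply: near; exists i.
by move: far (xc i) (xc' i); rewrite sqdist_midpoint; lra.
Qed.

Lemma center_of_near_centers (c : nat -> d.-tuple R) :
  (forall n i, sqdist (x i) (c n) <= r ^+ 2 + harmonic n) -> center_exists.
Proof.
move=> xc; apply: contrapT => nocenter.
have e0 : (fun n => 2 * harmonic n) @ \oo --> (0 : R).
  by rewrite -(mulr0 2); apply: cvgMr; exact: cvg_harmonic.
have cc m n : sqdist (c m) (c n) <= 2 * harmonic m + 2 * harmonic n.
  by rewrite -mulrDr; apply: sqdist_near_centers_le.
have cvg_c := cvg_tnth_of_sqdist_le _ _ e0 cc.
apply: nocenter; exists [tuple limn (fun n => tnth (c n) j) | j < d] => i.
have bound : (fun n => r ^+ 2 + harmonic n) @ \oo --> r ^+ 2 + 0.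
  exact: cvgD (cvg_cst _) cvg_harmonic.
rewrite -[r ^+ 2]addr0; apply: (ler_cvg_to _ bound).
  by apply: cvg_sqdist => j; rewrite tnth_mktuple; exact: cvg_c.
exact: nearW (xc ^~ i).
Qed.

End enclosing_ball.

Section box.
Context {R : realType}.

Definition box {n} (c : n.-tuple R) (h : R) : set (n.-tuple R) :=
  [set t | forall j, `|tnth t j - tnth c j| <= h].

Lemma box_cons n (c0 x : R) (c t : n.-tuple R) h :
  box [tuple of c0 :: c] h [tuple of x :: t] <-> `|x - c0| <= h /\ box c h t.
Proof.
split=> [xt | [x0 tc] j].
  split; first by have := xt ord0; rewrite !tnth0.
  by move=> j; have := xt (lift ord0 j); rewrite !tnthS.
by case: (unliftP ord0 j) => [j' ->|->]; rewrite ?tnthS ?tnth0.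
Qed.

Lemma measurable_box n (c : n.-tuple R) h : measurable (box c h).
Proof.
have -> : box c h =
    \bigcap_j (@tnth n R ^~ j @^-1` [set` `[tnth c j - h, tnth c j + h]]).
  apply/seteqP; split => t /= tc j.
    by move=> _; have := tc j; rewrite /= in_itv /= ler_distl.
  by have := tc j I; rewrite /= in_itv /= ler_distl.
apply: fin_bigcap_measurable finite_finset _ => j _.
by rewrite -[X in measurable X]setTI; apply: measurable_tnth.
Qed.

End box.

Section integral_bounds.
Context {R : realType}.
Local Open Scope ereal_scope.

(* Unlike [ge0_le_integral], this needs no measurability, which is unknown for
   the partial iterated integrals of [lebesgue_int_tuple]. *)
Lemma le_integralT_ge0 dT (T : measurableType dT)
    (mu : {measure set T -> \bar R}) (f g : T -> \bar R) :
  (forall x, 0 <= f x) -> (forall x, f x <= g x) ->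
  \int[mu]_x f x <= \int[mu]_x g x.
Proof.
move=> f0 fg; have g0 x : 0 <= g x by exact: le_trans (f0 x) (fg x).
rewrite !ge0_integralTE //; apply: le_ereal_sup => _ [h hf <-].
by exists h => // x; exact: le_trans (hf x) (fg x).
Qed.

Lemma lebesgue_int_tuple_ge0 n (g : n.-tuple R -> \bar R) :
  (forall t, 0 <= g t) -> 0 <= lebesgue_int_tuple g.
Proof.
elim: n g => [|n IH] g g0 /=; first exact: g0.
by apply: integral_ge0 => x _; apply: IH.
Qed.

Lemma integral_cst_indic_itv (a b K : R) : (a <= b)%R -> (0 <= K)%R ->
  \int[lebesgue_measure]_x (K * \1_[set` `[a, b]] x)%:E = (K * (b - a))%:E.
Proof.
move=> ab K0.
have := @integralZl_indic _ _ _ lebesgue_measure setT measurableT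
  (fun=> [set` `[a, b]]) K.
move=> /= -> //; last by move=> /lt_le_trans /(_ K0); rewrite ltxx.
rewrite integral_indic //= setIT lebesgue_measure_itv /= lte_fin.
move: ab; rewrite le_eqVlt => /orP[/eqP ->|->]; last by rewrite -EFinD -EFinM.
by rewrite ltxx subrr mulr0 mule0.
Qed.

Lemma lebesgue_int_tuple_le_box n (c : n.-tuple R) (h M : R)
    (g : n.-tuple R -> \bar R) : (0 <= h)%R -> (0 <= M)%R ->
  (forall t, 0 <= g t) -> (forall t, g t <= M%:E) ->
  (forall t, ~ box c h t -> g t = 0) ->
  lebesgue_int_tuple g <= (M * (2 * h) ^+ n)%:E.
Proof.
move=> h0; elim: n c M g => [|n IH] c M g M0 g0 gM gc /=.
  by rewrite expr0 mulr1.
case/tupleP: c gc => c0 c gc.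
have K0 : (0 <= M * (2 * h) ^+ n)%R by rewrite mulr_ge0 // exprn_ge0 ?mulr_ge0.
pose slab := [set` `[c0 - h, c0 + h]%R] : set R.
apply: (@le_trans _ _ (\int[lebesgue_measure]_x
    (M * (2 * h) ^+ n * \1_slab x)%:E)).
  apply: le_integralT_ge0 => x; first by apply: lebesgue_int_tuple_ge0.
  have slabE : (x \in slab) = (`|x - c0| <= h)%R.
    apply/idP/idP => [/set_mem|xc]; last apply/mem_set;
      by rewrite /slab /= in_itv /= -ler_distl.
  rewrite indicE slabE; have [xc|xc] := boolP (`|x - c0| <= h)%R.
    by rewrite mulr1; apply: IH => // t tc; apply: gc => /box_cons[_ /tc].
  rewrite mulr0 -(mul0r ((2 * h) ^+ n)%R).
  have gx0 t : g (cons_tuple x t) = 0.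
    by apply: gc => /box_cons[xc' _]; rewrite xc' in xc.
  by apply: (IH c) => // t; rewrite gx0.
rewrite /slab integral_cst_indic_itv // ?lerD2l ?ge0_cp // lee_fin exprSr mulrA.
by rewrite (_ : c0 + h - (c0 - h) = 2 * h)%R //; ring.
Qed.

Lemma prob_le_density_box {dO} {O : measurableType dO} {P : probability O R} {n}
    {Y : O -> n.-tuple R} {f : n.-tuple R -> R} {M h : R} {c : n.-tuple R}
    {B : set (n.-tuple R)} :
  has_density P Y f -> (forall x, 0 <= f x)%R -> (forall x, f x <= M)%R ->
  (0 <= h)%R -> measurable B -> B `<=` box c h ->
  P (Y @^-1` B) <= (M * (2 * h) ^+ n)%:E.
Proof.
move=> Yf f0 fM h0 mB Bc; rewrite Yf //.
have M0 : (0 <= M)%R by exact: le_trans (f0 c) (fM c).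
apply: (lebesgue_int_tuple_le_box _ c) => // [t|t|t tc].
- by rewrite lee_fin mulr_ge0.
- by rewrite lee_fin indicE; case: (t \in B); rewrite ?mul1r ?mul0r.
- by rewrite indicE memNset ?mul0r //; apply: contra_not tc; apply: Bc.
Qed.

End integral_bounds.

Section in_ball_event_measurable.
Context {R : realType} {d : nat}.

Lemma rat_near_center {k} (x : 'I_k -> d.-tuple R) (c : d.-tuple R) {r e : R} :
  0 <= r -> 0 < e -> (forall i, sqdist (x i) c <= r ^+ 2) ->
  exists q : d.-tuple rat,
    forall i, sqdist (x i) (map_tuple ratr q) <= r ^+ 2 + e.
Proof.
move=> r0 e0 xc.
pose D := d%:R * (2 * r + 1).
have D0 : 0 <= D by rewrite mulr_ge0 //; lra.
pose dl := Order.min 1 (e / (D + 1)).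
have dl0 : 0 < dl by rewrite lt_min ltr01 divr_gt0 //; lra.
have dl1 : dl <= 1 by rewrite ge_min lexx.
have dle : dl * (D + 1) <= e.
  by rewrite -ler_pdivlMr ?ge_min ?lexx ?orbT //; lra.
have [q cq] : exists q : d.-tuple rat,
    forall j, `|tnth c j - tnth (map_tuple ratr q) j| <= dl.
  have qj j : exists a : rat, `|tnth c j - ratr a| < dl.
    have [a] := @rat_in_itvoo R (tnth c j - dl) (tnth c j + dl) ltac:(lra).
    by rewrite in_itv /= => ca; exists a; rewrite distrC ltr_distl.
  have [qf cqf] := choice qj.
  by exists [tuple qf j | j < d] => j; rewrite tnth_map tnth_mktuple ltW.
exists q => i.
apply: le_trans (sqdist_le_perturb _ _ _ _ _ r0 (ltW dl0) _ cq) _.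
  by move=> j; apply: dist_tnth_le.
have : d%:R * (2 * r * dl + dl ^+ 2) <= D * dl.
  have d0 : 0 <= d%:R :> R by [].
  have dl2 : dl * dl <= dl by nra.
  by rewrite /D expr2; nra.
by have := xc i; nra.
Qed.

Lemma measurable_sqdist_le dO (O : measurableType dO) (Y : O -> d.-tuple R)
    (c : d.-tuple R) (t : R) :
  measurable_fun [set: O] Y -> measurable [set w | sqdist (Y w) c <= t].
Proof.
move=> mY; rewrite -[X in measurable X]setTI; apply: measurable_fun_le => //.
apply: measurable_sum => j; apply: measurable_realfun.measurable_funX.
apply: measurable_realfun.measurable_funB => //.
exact: measurableT_comp (measurable_tnth j) mY.
Qed.

Lemma in_ball_event_measurable dO (O : measurableType dO) k
    (X : 'I_k -> O -> d.-tuple R) (r : R) :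
  0 <= r -> (forall i, measurable_fun [set: O] (X i)) ->
  measurable (in_ball_event X r).
Proof.
move=> r0 mX.
have -> : in_ball_event X r = \bigcap_n \bigcup_(q : d.-tuple rat) \bigcap_i
    [set w | sqdist (X i w) (map_tuple ratr q) <= r ^+ 2 + harmonic n].
  apply/seteqP; split => w /=.
    move=> [c xc] n _.
    have [q xq] := rat_near_center _ c r0 (harmonic_gt0 n) xc.
    by exists q => // i _; exact: xq.
  move=> near; have /choice[q xq] : forall n, exists q : d.-tuple rat,
      forall i, sqdist (X i w) (map_tuple ratr q) <= r ^+ 2 + harmonic n.
    by move=> n; have [q _ xq] := near n I; exists q => i; exact: xq i I.
  exact: (@center_of_near_centers _ _ _ _ _ (fun n => map_tuple ratr (q n))).
apply: bigcapT_measurable => n.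
apply: countable_bigcupT_measurable => [|q]; first exact: countableP.
apply: fin_bigcap_measurable finite_finset _ => i _.
exact: measurable_sqdist_le.
Qed.

End in_ball_event_measurable.

Section cubes.
Context {R : realType} {d : nat}.
Implicit Types (s : R) (z : d.-tuple int) (t u : d.-tuple R).

Definition cube s z : set (d.-tuple R) :=
  [set t | forall j, Num.floor (tnth t j / s) = tnth z j].

Definition cube_index s t : d.-tuple int :=
  [tuple Num.floor (tnth t j / s) | j < d].

Definition cube_center s z : d.-tuple R :=
  [tuple (tnth z j)%:~R * s + s / 2 | j < d].

Lemma cube_index_mem s t : cube s (cube_index s t) t.
Proof. by move=> j; rewrite tnth_mktuple. Qed.

Lemma mem_cube_index s z t : cube s z t -> cube_index s t = z.
Proof. by move=> tz; apply: eq_from_tnth => j; rewrite tnth_mktuple tz. Qed.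

Lemma cube_bounds {s z t} j : 0 < s -> cube s z t ->
  (tnth z j)%:~R * s <= tnth t j < (tnth z j)%:~R * s + s.
Proof.
move=> s0 /(_ j) /eqP; rewrite Num.Theory.floor_eq intrD1.
by rewrite ler_pdivlMr // ltr_pdivrMr // mulrDl mul1r.
Qed.

Lemma measurable_cube s z : 0 < s -> measurable (cube s z).
Proof.
move=> s0; have -> : cube s z = \bigcap_j (@tnth d R ^~ j @^-1`
    [set` `[(tnth z j)%:~R * s, (tnth z j)%:~R * s + s[]).
  apply/seteqP; split => t tz j.
    by move=> _; rewrite /= in_itv; exact: cube_bounds tz.
  have /= := tz j I; rewrite in_itv /= => /andP[lo hi].
  apply/eqP; rewrite Num.Theory.floor_eq intrD1 ler_pdivlMr // ltr_pdivrMr //.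
  by rewrite mulrDl mul1r lo hi.
apply: fin_bigcap_measurable finite_finset _ => j _.
by rewrite -[X in measurable X]setTI; apply: measurable_tnth.
Qed.

Lemma cube_sub_box s z t u a : 0 < s -> cube s z t ->
  (forall j, `|tnth u j - tnth t j| <= a) ->
  box (cube_center s z) (s / 2 + a) u.
Proof.
move=> s0 tz ut j; have := cube_bounds j s0 tz; have := ut j.
rewrite tnth_mktuple !ler_norml => /andP[? ?] /andP[? ?].
by apply/andP; split; lra.
Qed.

End cubes.

Section disjoint_cover.
Context {R : realType}.
Local Open Scope ereal_scope.

Lemma prode_le_expr n (F : 'I_n -> \bar R) (K : R) : (0 <= K)%R ->
  (forall i, 0 <= F i) -> (forall i, F i <= K%:E) ->
  \prod_(i < n) F i <= (K ^+ n)%:E.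
Proof.
move=> K0 F0 FK; elim: n F F0 FK => [|n IH] F F0 FK; first by rewrite big_ord0.
rewrite big_ord_recr /= exprSr EFinM; apply: lee_pmul => //.
  by apply: prode_ge0 => i _.
exact: IH.
Qed.

Lemma prob_le_disjoint_cover {dO} {O : measurableType dO} (P : probability O R)
    (E : set O) (A C : nat -> set O) (K : R) : (0 <= K)%R ->
  measurable E -> (forall n, measurable (A n)) ->
  (forall n, measurable (C n)) ->
  trivIset setT A -> E `<=` \bigcup_n C n ->
  (forall n, P (C n) <= P (A n) * K%:E) -> P E <= K%:E.
Proof.
move=> K0 mE mA mC tA EC CA.
have sumA : \sum_(n <oo) P (A n) <= 1.
  have := measure_bigcup P setT A (fun n _ => mA n) tA.
  rewrite (@eq_eseriesl _ _ xpredT); last by move=> n; rewrite in_setT.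
  move=> <-; apply: probability_le1.
  by apply: bigcup_measurable => n _; exact: mA.
apply: le_trans (@measure_sigma_subadditive _ _ _ P _ _ mC mE EC) _.
apply: le_trans (lee_nneseries (fun n _ _ => measure_ge0 _ _)
  (fun n _ => CA n)) _.
rewrite (eq_eseriesr (fun n _ => muleC _ K%:E)) nneseriesZl //.
by rewrite -[leRHS]mule1 lee_wpmul2l ?lee_fin.
Qed.

End disjoint_cover.

Lemma in_bigsetI (T : Type) k (F : 'I_k -> set T) w :
  (\big[setI/setT]_(i < k) F i) w <-> forall i, F i w.
Proof.
rewrite -bigcap_seq; split=> [Fw i | Fw i _]; last exact: Fw.
exact: Fw (mem_index_enum i).
Qed.

Section cube_blocks.
Context {R : realType} {d k : nat}.

(* Blocks are indexed by nat through [pickle_inv]; an index that decodes to no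
   cube gives an empty block. *)
Definition cube_block (s h : R) (n : nat) (i : 'I_k.+1) : set (d.-tuple R) :=
  if @pickle_inv (d.-tuple int) n is Some z then
    if i == ord0 then cube s z else box (cube_center s z) h
  else set0.

Lemma measurable_cube_block s h n i : 0 < s -> measurable (cube_block s h n i).
Proof.
rewrite /cube_block => s0; case: (pickle_inv n) => // z.
by case: ifP => _; [exact: measurable_cube | exact: measurable_box].
Qed.

Lemma cube_block_ord0_inj s h n m t :
  cube_block s h n ord0 t -> cube_block s h m ord0 t -> n = m.
Proof.
rewrite /cube_block /=.
case En: (pickle_inv n) => [z|] //; case Em: (pickle_inv m) => [z'|] //.
move=> /mem_cube_index tz /mem_cube_index tz'.
have := @pickle_invK (d.-tuple int) n; have := @pickle_invK (d.-tuple int) m.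
by rewrite En Em /= -tz -tz' => -> ->.
Qed.

Lemma cube_block_cover s a (x : 'I_k.+1 -> d.-tuple R) : 0 < s ->
  (forall i j, `|tnth (x i) j - tnth (x ord0) j| <= a) ->
  forall i, cube_block s (s / 2 + a) (pickle (cube_index s (x ord0))) i (x i).
Proof.
move=> s0 x0 i; rewrite /cube_block pickleK_inv.
case: ifP => [/eqP -> | _]; first exact: cube_index_mem.
exact: cube_sub_box s0 (cube_index_mem _ _) (x0 i).
Qed.

End cube_blocks.

Section in_ball_event_bound.
Context {R : realType} {d k : nat} {dO : measure_display}.
Context {O : measurableType dO}.
Variables (P : probability O R) (X : 'I_k.+1 -> O -> d.-tuple R).
Variables (f : d.-tuple R -> R) (M : R).
Hypotheses (mX : forall i, measurable_fun [set: O] (X i))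
  (Xf : forall i, has_density P (X i) f) (Xind : mutually_independent P X)
  (f0 : forall x, 0 <= f x) (fM : forall x, f x <= M).

Let M0 : 0 <= M. Proof. exact: le_trans (f0 [tuple 0 | _ < d]) (fM _). Qed.

Lemma measurable_preimage_cube_block s h n i : 0 < s ->
  measurable (X i @^-1` cube_block s h n i).
Proof.
move=> s0; rewrite -[X in measurable X]setTI.
by apply: mX => //; exact: measurable_cube_block.
Qed.

Lemma prob_cube_block_le s h n (i : 'I_k) : 0 <= h ->
  (P (X (lift ord0 i) @^-1` cube_block s h n (lift ord0 i))
    <= (M * (2 * h) ^+ d)%:E)%E.
Proof.
move=> h0; rewrite /cube_block eq_sym (negbTE (neq_lift ord0 i)).
case: (pickle_inv n) => [z|].
  apply: (prob_le_density_box (Xf _) f0 fM h0).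
  - exact: measurable_box.
  - exact: subset_refl.
rewrite (_ : _ @^-1` _ = set0) ?measure0 ?lee_fin; last exact: preimage_set0.
by rewrite mulr_ge0 // exprn_ge0 // mulr_ge0.
Qed.

Lemma prob_in_ball_event_le r : 0 < r ->
  (P (in_ball_event X r) <= ((M * (6 * r) ^+ d) ^+ k)%:E)%E.
Proof.
move=> r0; have s0 : 0 < 2 * r by lra.
pose B : nat -> 'I_k.+1 -> set (d.-tuple R) := cube_block (2 * r) (3 * r).
apply: (prob_le_disjoint_cover P _ (fun n => X ord0 @^-1` B n ord0)
    (fun n => \big[setI/setT]_i (X i @^-1` B n i))).
- by rewrite exprn_ge0 // mulr_ge0 // exprn_ge0 //; lra.
- exact: in_ball_event_measurable (ltW r0) mX.
- by move=> n; exact: measurable_preimage_cube_block.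
- move=> n; apply: bigsetI_measurable => i _.
  exact: measurable_preimage_cube_block.
- by move=> n m _ _ [w [wn wm]]; exact: cube_block_ord0_inj wn wm.
- move=> w [c xc]; eexists => //; apply/in_bigsetI.
  rewrite /B (_ : 3 * r = 2 * r / 2 + 2 * r); last by lra.
  apply: cube_block_cover => // i j.
  have := dist_tnth_le j (ltW r0) (xc i).
  have := dist_tnth_le j (ltW r0) (xc ord0).
  rewrite !ler_norml => /andP[? ?] /andP[? ?]; apply/andP; split; lra.
- move=> n; rewrite Xind; last by move=> i; exact: measurable_cube_block.
  rewrite big_ord_recl lee_wpmul2l //; apply: prode_le_expr => [|i|i].
  + by rewrite mulr_ge0 // exprn_ge0 //; lra.
  + exact: measure_ge0.
  + by rewrite (_ : 6 * r = 2 * (3 * r)); [apply: prob_cube_block_le | ]; lra.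
Qed.

End in_ball_event_bound.

Theorem lemma5p1 (R : realType) (d k : nat) (f : d.-tuple R -> R) :
  (0 < k)%N ->
  measurable_fun [set: d.-tuple R] f ->
  (forall x, 0 <= f x) ->
  (exists M : R, forall x, f x <= M) ->
  exists cstar : R,
    forall (dO : measure_display) (O : measurableType dO)
           (P : probability O R) (X : 'I_k -> O -> d.-tuple R),
      (forall i, measurable_fun [set: O] (X i)) ->
      (forall i, has_density P (X i) f) ->
      mutually_independent P X ->
      forall r : R, 0 < r ->
        (P (in_ball_event X r) <= (cstar * r ^+ (d * k.-1))%:E)%E.
Proof.
move=> k0 _ f0 [M fM]; case: k k0 => [//|k] _ /=.
exists ((M * 6 ^+ d) ^+ k) => dO O P X mX Xf Xind r r0.
rewrite exprM -exprMn -mulrA -exprMn.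
exact: prob_in_ball_event_le.
Qed.
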